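(* Assume the high-level cost is $H(x,u,\theta)=L(x,u,\theta)+B(\theta)$ with $B(\theta)=\sum_j-\ln(g_j(\theta))$, where $g(\theta)\ge0\iff\theta\in\mathcal{T}$ and $\mathcal{T}\subset\mathbb{R}^c$ is compact. Let $H_k(\theta)=J^L(x_0^k,\theta)+B(\theta)$, let $\theta$ be a point at which $H_k$ is finite, and let $p$ be a descent direction for $H_k$ at $\theta$, i.e. $\nabla_\theta H_k(\theta)^Tp<0$. Then for constants $0<c_1<c_2<1$ there exists $\alpha>0$ satisfying the Wolfe conditions $H_k(\theta+\alpha p)\le H_k(\theta)+c_1\alpha\nabla_\theta H_k(\theta)^Tp$ and $\nabla_\theta H_k(\theta+\alpha p)^Tp\ge c_2\nabla_\theta H_k(\theta)^Tp$.
   Context: $J^L(x_0,\theta)$ is the optimal value of the low-level MPC program $\min_{x,u}L(x,u,\theta)$ s.t. $(x,u)\in\mathcal{C}(\theta)$, $x_{i+1}=f(x_i,u_i,\theta)$ with initial condition $x_0$; $x_0^k$ is the initial condition at time step $k$. *)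

From HB Require Import structures.
From mathcomp Require Import all_boot all_order all_algebra.
From mathcomp Require Import all_classical all_reals all_analysis.
Set Implicit Arguments. Unset Strict Implicit. Unset Printing Implicit Defensive.
Import Order.TTheory GRing.Theory Num.Theory.
Local Open Scope classical_set_scope.
Local Open Scope ring_scope.

Definition feas_set (R : realType) (c m : nat) (g : 'I_m -> 'rV[R]_c -> R)
  : set 'rV[R]_c := [set th | forall j, 0 <= g j th].

Definition barrier (R : realType) (c m : nat) (g : 'I_m -> 'rV[R]_c -> R)
  (th : 'rV[R]_c) : R := \sum_(j < m) - ln (g j th).

(* H_k(theta) = J^L(x_0^k, theta) + B(theta), with J th = J^L(x_0^k, th). *)
Definition Hk (R : realType) (c m : nat) (J : 'rV[R]_c -> R)
  (g : 'I_m -> 'rV[R]_c -> R) (th : 'rV[R]_c) : R := J th + barrier g th.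

From HB Require Import structures.
From mathcomp Require Import all_boot all_order all_algebra.
From mathcomp Require Import all_classical all_reals all_analysis.
From mathcomp Require Import lra.
Set Implicit Arguments. Unset Strict Implicit. Unset Printing Implicit Defensive.
Import Order.TTheory GRing.Theory Num.Theory numFieldNormedType.Exports.
Local Open Scope classical_set_scope.
Local Open Scope ring_scope.

(* The compact feasible set is left at a first exit point where
   some g_j vanishes, so -ln g_j makes H_k unbounded just before it: there is
   a > 0 with the segment [th, th + a p] strictly feasible and
   H_k (th + a p) >= H_k th.  On [0, a] the function
   psi s = H_k (th + s p) - c1 s H_k'(th; p) has negative slope at 0 and
   psi 0 <= psi a, hence an interior minimiser b.  Then psi b < psi 0 is the
   sufficient-decrease condition, and psi'(b) = 0 gives
   H_k'(th + b p; p) = c1 H_k'(th; p) >= c2 H_k'(th; p). *)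

Lemma derive_lt0_near_right (R : realFieldType) (f : R -> R) (x : R) :
  derivable f x 1 -> 'D_1 f x < 0 -> \forall y \near x^'+, f y < f x.
Proof.
move=> /cvgr_lt fx /fx [e /= e0 He].
exists e => // y /= xye xy.
have := He (y - x); rewrite /ball_ /= sub0r normrN distrC subr_eq0 gt_eqF //.
rewrite [_%:A]mulr1 subrK => /(_ xye isT).
by rewrite pmulr_rlt0 ?invr_gt0 ?subr_gt0 // subr_lt0.
Qed.

Lemma exists_interior_critical (R : realType) (f : R -> R) (x y : R) :
  x < y -> {in `[x, y], forall t, derivable f t 1} -> 'D_1 f x < 0 ->
  f x <= f y -> exists2 c, c \in `]x, y[ & f c < f x /\ is_derive c 1 f 0.
Proof.
move=> xy df dfx fxy.
have [c cxy fcmin] := EVT_min (ltW xy) (derivable_within_continuous df).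
have [h [fh xh hy]] : exists h, [/\ f h < f x, x < h & h < y].
  apply: (@filter_ex _ x^'+).
  near=> h; split; near: h; last exact: nbhs_right_lt.
    by apply: derive_lt0_near_right => //; apply: df; rewrite in_itv /= lexx ltW.
  exact: nbhs_right_gt.
have fc : f c < f x by apply: le_lt_trans (fcmin h _) fh; rewrite in_itv /= !ltW.
have cxy' : c \in `]x, y[.
  rewrite in_itv /= !lt_neqAle !(itvP cxy) !andbT.
  apply/andP; split; apply/eqP => ec; move: fc; rewrite ec ?ltxx //.
  by rewrite ltNge fxy.
exists c => //; split => //.
apply: derive1_at_min (ltW xy) _ cxy' _ => t txy.
  by apply: df; rewrite in_itv /= !ltW ?(itvP txy).
by apply: fcmin; rewrite in_itv /= !ltW ?(itvP txy).
Unshelve. all: by end_near. Qed.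

Lemma exists_wolfe_step (R : realType) (phi D : R -> R) (a c1 c2 : R) :
  0 < a -> {in `[0, a], forall s : R, is_derive s 1 phi (D s)} -> D 0 < 0 ->
  0 <= c1 -> c1 < 1 -> c1 <= c2 -> phi 0 <= phi a ->
  exists2 b, 0 < b < a & phi b <= phi 0 + c1 * b * D 0 /\ c2 * D 0 <= D b.
Proof.
move=> a0 dphi D0 c1_ge0 c1_lt1 c12 phi0a.
pose psi s := phi s - c1 * D 0 * s.
have dpsi (s : R) : s \in `[0, a] -> is_derive s 1 psi (D s - c1 * D 0).
  have -> : psi = phi - (c1 * D 0) \*: id by [].
  move=> /dphi ?; rewrite -[X in D s - X]mulr1.
  exact: is_deriveB.
have Dpsi (s : R) : s \in `[0, a] -> 'D_1 psi s = D s - c1 * D 0.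
  by move=> /dpsi ?; rewrite derive_val.
have zero_in : 0 \in `[0, a] by rewrite in_itv /= lexx ltW.
have [|||b bin [psib db]] := @exists_interior_critical _ psi _ _ a0.
- by move=> s /dpsi [].
- by rewrite Dpsi // -{1}(mul1r (D 0)) -mulrBl pmulr_rlt0 // subr_gt0.
- rewrite /psi mulr0 subr0 (le_trans phi0a) // lerDl oppr_ge0.
  exact: mulr_le0_ge0 (mulr_ge0_le0 c1_ge0 (ltW D0)) (ltW a0).
have Db : D b = c1 * D 0.
  apply/eqP; rewrite -subr_eq0 -Dpsi ?in_itv /= ?ltW ?(itvP bin) //.
  by rewrite (@derive_val _ _ _ _ _ _ _ db).
exists b; first by rewrite in_itv in bin.
split; last by rewrite Db ler_wnM2r // ltW.
move: psib; rewrite /psi mulr0 subr0 ltrBlDr => /ltW.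
by rewrite mulrAC.
Qed.

Lemma is_derive_line (R : numFieldType) (V W : normedModType R) (F : V -> W)
    (x p : V) (s : R) :
  differentiable F (x + s *: p) ->
  is_derive s 1 (fun a : R => F (x + a *: p)) ('d F (x + s *: p) p).
Proof.
move=> dF.
pose y := x + s *: p.
have quotE : (fun h : R => h^-1 *: (((fun a => F (x + a *: p)) \o shift s) h%:A - F y))
           = (fun h : R => h^-1 *: ((F \o shift y) (h *: p) - F y)).
  by apply/funext => h /=; rewrite [h%:A]mulr1 scalerDl addrCA addrA.
apply: DeriveDef; rewrite /derivable /derive quotE; first exact: diff_derivable.
by rewrite -deriveE.
Qed.

Lemma continuous_line (R : numFieldType) (V : normedModType R) (x p : V) :
  continuous (fun s : R => x + s *: p).
Proof.
move=> s; apply: (@continuousD _ _ _ (cst x) (fun s : R => s *: p)).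
  exact: cst_continuous.
exact: scalel_continuous.
Qed.

Lemma differentiable_Hk (R : realType) (c m : nat) (J : 'rV[R]_c -> R)
    (g : 'I_m -> 'rV[R]_c -> R) (x : 'rV[R]_c) :
  differentiable J x -> (forall j, differentiable (g j) x) ->
  (forall j, 0 < g j x) -> differentiable (Hk J g) x.
Proof.
move=> dJ dg gpos.
have -> : Hk J g = J + \sum_(j < m) (fun y => - ln (g j y)).
  by apply/funext => y; rewrite /Hk /barrier fct_sumE.
apply: differentiableD => //; apply: differentiable_sum => j.
apply: differentiableN; apply: (differentiable_comp (g := @ln R)) => //.
by apply/derivable1_diffP; have [] := is_derive1_ln (gpos j).
Qed.

Lemma barrier_unbounded_near (R : realType) (c m : nat)
    (g : 'I_m -> 'rV[R]_c -> R) (q : 'rV[R]_c) (j0 : 'I_m) :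
  (forall j, {for q, continuous (g j)}) -> g j0 q <= 0 ->
  forall M, \forall y \near q, (forall j, 0 < g j y) -> M <= barrier g y.
Proof.
move=> gq gj0 M.
(* Not g i q + 1, which may be nonpositive, where ln is not monotone. *)
pose G i := `|g i q| + 1.
pose L := \sum_(i < m | i != j0) ln (G i).
have near_G : \forall y \near q, forall i, g i y < G i.
  apply: (@filter_forall _ _ (fun i y => g i y < G i) (nbhs q) _) => i.
  by apply: (cvgr_lt _ (gq i)); rewrite /G ltr_pwDr // ler_norm.
have near_j0 : \forall y \near q, g j0 y < expR (- (M + L)).
  exact: cvgr_lt _ (gq j0) _ (le_lt_trans gj0 (expR_gt0 _)).
near=> y => gpos.
have Gy : forall i, g i y < G i by near: y.
have lnj0 : M + L < - ln (g j0 y).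
  by rewrite ltrNr -[X in _ < X]expRK ltr_ln ?posrE ?expR_gt0 //; near: y.
have lnG : \sum_(i < m | i != j0) - ln (G i)
           <= \sum_(i < m | i != j0) - ln (g i y).
  by apply: ler_sum => i _; rewrite lerN2 ler_ln ?posrE ?ltr_pwDr //; exact/ltW.
rewrite /barrier (bigD1 j0) //=; rewrite sumrN -/L in lnG; lra.
Unshelve. all: by end_near. Qed.

Lemma Hk_unbounded_near (R : realType) (c m : nat) (J : 'rV[R]_c -> R)
    (g : 'I_m -> 'rV[R]_c -> R) (q : 'rV[R]_c) (j0 : 'I_m) :
  {for q, continuous J} -> (forall j, {for q, continuous (g j)}) ->
  g j0 q <= 0 ->
  forall M, \forall y \near q, (forall j, 0 < g j y) -> M <= Hk J g y.
Proof.
move=> Jq gq gj0 M.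
have near_barrier := barrier_unbounded_near gq gj0 (M - (J q - 1)).
near=> y => gpos.
have Jy : J q - 1 < J y by near: y; apply: (cvgr_gt _ Jq); rewrite gtrBl.
have By : M - (J q - 1) <= barrier g y by move: gpos; near: y.
rewrite /Hk; lra.
Unshelve. all: by end_near. Qed.

Section ray_exit.
Variables (R : realType) (c m : nat) (g : 'I_m -> 'rV[R]_c -> R).
Variables (th p : 'rV[R]_c).
Hypothesis feas_compact : compact (feas_set g).
Hypothesis g_cont : forall j x, feas_set g x -> {for x, continuous (g j)}.
Hypothesis g_th_gt0 : forall j, 0 < g j th.
Hypothesis p_neq0 : p != 0.

Definition ray_feasible (s : R) := forall j, 0 < g j (th + s *: p).

Definition feasible_prefix :=
  [set a : R | 0 <= a /\ forall s, 0 <= s <= a -> ray_feasible s].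

Definition ray_exit := sup feasible_prefix.

Lemma feasible_prefix0 : feasible_prefix 0.
Proof.
split=> // s; rewrite -eq_le => /eqP <-.
by rewrite /ray_feasible scale0r addr0.
Qed.

Lemma has_sup_feasible_prefix : has_sup feasible_prefix.
Proof.
split; first by exists 0; exact: feasible_prefix0.
have [M [_ feas_bounded]] := compact_bounded feas_compact.
have p_gt0 : 0 < `|p| by rewrite normr_gt0.
exists ((M + 1 + `|th|) / `|p|) => a [a_ge0 feas_a].
have /feas_bounded : feas_set g (th + a *: p).
  by move=> j; apply/ltW/feas_a; rewrite a_ge0 lexx.
move=> /(_ (M + 1) (ltr_pwDr ltr01 (lexx M))) bound_a.
rewrite ler_pdivlMr // -(ger0_norm a_ge0) -normrZ.
apply: le_trans (lerD bound_a (lexx `|th|)).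
by rewrite -[X in `|X|](addKr th) addrC ler_normB.
Qed.

Lemma ray_exit_ge0 : 0 <= ray_exit.
Proof. exact: (sup_upper_bound has_sup_feasible_prefix feasible_prefix0). Qed.

Lemma ray_feasible_lt_exit t : 0 <= t < ray_exit -> ray_feasible t.
Proof.
move=> /andP [t_ge0 t_lt].
have gap : 0 < ray_exit - t by rewrite subr_gt0.
have [a [_ feas_a] /=] := sup_adherent gap has_sup_feasible_prefix.
rewrite opprB addrCA subrr addr0 => ta.
by apply: feas_a; rewrite t_ge0 ltW.
Qed.

Lemma feas_set_ray_exit : feas_set g (th + ray_exit *: p).
Proof.
have [exit0 | exit_neq0] := eqVneq ray_exit 0.
  by rewrite exit0 scale0r addr0 => j; exact: ltW.
have exit_gt0 : 0 < ray_exit by rewrite lt_neqAle eq_sym exit_neq0 ray_exit_ge0.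
have feas_closed : closed (feas_set g).
  exact: compact_closed (@norm_hausdorff _ _) feas_compact.
have cvg_exit : (fun t => th + t *: p) @ ray_exit^'- --> th + ray_exit *: p.
  by apply: cvg_within_filter; exact: continuous_line.
apply: (closed_cvg _ feas_closed _ _ cvg_exit).
near=> t => j; apply/ltW/ray_feasible_lt_exit; apply/andP; split.
  by apply/ltW; near: t; exact: nbhs_left_gt.
by near: t; exact: nbhs_left_lt.
Unshelve. all: by end_near. Qed.

Lemma ray_exit_infeasible : exists j, g j (th + ray_exit *: p) <= 0.
Proof.
apply/not_existsP => ray_exit_pos.
have q_pos j : 0 < g j (th + ray_exit *: p) by rewrite ltNge; apply/negP.
have /continuous_line/nbhs_ballP [e e_gt0 feas_ball] :
    \forall y \near th + ray_exit *: p, forall j, 0 < g j y.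
  apply: (@filter_forall _ _ (fun j y => 0 < g j y) (nbhs _) _) => j.
  exact: cvgr_gt (g_cont feas_set_ray_exit) _ (q_pos j).
have : feasible_prefix (ray_exit + e / 2).
  split=> [|s /andP [s_ge0 s_le]].
    by rewrite addr_ge0 ?ray_exit_ge0 ?divr_ge0 ?ltW.
  have [s_lt | s_ge] := ltP s ray_exit.
    by apply: ray_feasible_lt_exit; rewrite s_ge0.
  apply: feas_ball; rewrite /ball /= distrC ger0_norm ?subr_ge0 // ltrBlDl.
  by apply: le_lt_trans s_le _; rewrite ltrD2l gtr_pMr // invf_lt1 // ltr1n.
move=> /(sup_upper_bound has_sup_feasible_prefix).
by rewrite -/ray_exit gerDl leNgt divr_gt0.
Qed.

Lemma ray_exit_gt0 : 0 < ray_exit.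
Proof.
rewrite lt_neqAle ray_exit_ge0 andbT; apply/eqP => exit0.
have [j] := ray_exit_infeasible.
by rewrite -exit0 scale0r addr0 leNgt g_th_gt0.
Qed.

Lemma ray_reaches_level (J : 'rV[R]_c -> R) :
    (forall x, feas_set g x -> {for x, continuous J}) -> forall M,
  exists a, [/\ 0 < a, forall s, 0 <= s <= a -> ray_feasible s
                     & M <= Hk J g (th + a *: p)].
Proof.
move=> J_cont M.
have [j0 g_exit_le0] := ray_exit_infeasible.
have /continuous_line near_exit := Hk_unbounded_near (J_cont _ feas_set_ray_exit)
  (fun j => @g_cont j _ feas_set_ray_exit) g_exit_le0 M.
have [a [a_gt0 a_lt Ma]] :
    exists a, [/\ 0 < a, a < ray_exit & ray_feasible a -> M <= Hk J g (th + a *: p)].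
  apply: (@filter_ex _ ray_exit^'-); near=> a; split.
  - by near: a; exact: nbhs_left_gt ray_exit_gt0.
  - by near: a; exact: nbhs_left_lt.
  - near: a.
    exact: (@cvg_within _ (nbhs ray_exit) _ (fun y => y < ray_exit) _ near_exit).
exists a; split => // [s /andP [s_ge0 s_le] | ].
  by apply: ray_feasible_lt_exit; rewrite s_ge0 (le_lt_trans s_le).
by apply: Ma; apply: ray_feasible_lt_exit; rewrite ltW.
Unshelve. all: by end_near. Qed.

End ray_exit.

Theorem lemma4 (R : realType) (c m : nat) (J : 'rV[R]_c -> R)
  (g : 'I_m -> 'rV[R]_c -> R)
  (hT : compact (feas_set g : set 'rV[R]_c))
  (hJ : forall th, feas_set g th -> differentiable J th)
  (hg : forall j th, feas_set g th -> differentiable (g j) th)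
  (th p : 'rV[R]_c)
  (hfin : forall j, 0 < g j th)
  (hdesc : 'd (Hk J g) th p < 0)
  (c1 c2 : R) (hc1 : 0 < c1) (hc12 : c1 < c2) (hc2 : c2 < 1) :
  exists alpha : R, 0 < alpha /\
    (forall j, 0 < g j (th + alpha *: p)) /\
    Hk J g (th + alpha *: p) <= Hk J g th + c1 * alpha * 'd (Hk J g) th p /\
    c2 * 'd (Hk J g) th p <= 'd (Hk J g) (th + alpha *: p) p.
Proof.
have p_neq0 : p != 0 by apply: contraTneq hdesc => ->; rewrite linear0 ltxx.
have [a [a_gt0 feas_segment Ha]] :=
  ray_reaches_level hT (fun j x fx => differentiable_continuous (hg j x fx))
    hfin p_neq0 (fun x fx => differentiable_continuous (hJ x fx)) (Hk J g th).
have line_derivative (s : R) : s \in `[0, a] -> is_derive s 1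
    (fun b => Hk J g (th + b *: p)) ('d (Hk J g) (th + s *: p) p).
  move=> /feas_segment feas_s; apply/is_derive_line/differentiable_Hk => //.
  - by apply: hJ => j; exact/ltW.
  - by move=> j; apply: hg => i; exact/ltW.
have th0 : th + 0 *: p = th by rewrite scale0r addr0.
have [||b /andP [b_gt0 b_lt_a]] := exists_wolfe_step a_gt0 line_derivative _
  (ltW hc1) (lt_trans hc12 hc2) (ltW hc12).
- by rewrite th0.
- by rewrite th0.
rewrite th0 => -[armijo curvature]; exists b; split => //; split => //.
by apply: feas_segment; rewrite !ltW.
Qed.
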